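(* Consider two states $\Theta=\{0,1\}$. Let $\mathcal{U}$ be the class of state-dependent utility functions $u\colon \mathbb{R}\times\Theta\to\mathbb{R}$ such that for each $\theta\in\Theta$ the function $u_\theta:=u(\cdot,\theta)$ is strictly increasing and weakly concave. Fix numbers $\alpha,\beta,\hat\alpha,\hat\beta>0$ and a nonempty set $W\subseteq\mathbb{R}$. For a belief $\mu\in[0,1]$ (the probability of state $1$), a utility $u\in\mathcal{U}$ and a wealth $w\in\mathbb{R}$, write $s\succeq r$ if $$\mu u_1(w)+(1-\mu)u_0(w)\ \ge\ \mu u_1(w+\alpha)+(1-\mu)u_0(w-\beta),$$ and $s\succeq \hat r$ if $$\mu u_1(w)+(1-\mu)u_0(w)\ \ge\ \mu u_1(w+\hat\alpha)+(1-\mu)u_0(w-\hat\beta).$$ Say that ''the safe option must remain optimal'' if for every $u\in\mathcal{U}$ and every belief $\mu\in[0,1]$: if $s\succeq r$ holds for all $w\in W$, then $s\succeq\hat r$ holds for all $w\in W$. Say that ''the risky option becomes worse'' if $\hat\beta\ge\beta$ and $\frac{\alpha}{\beta}\ge\frac{\hat\alpha}{\hat\beta}$. Then the safe option must remain optimal if and only if the risky option becomes worse.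
   Context: Interpretation: a decision-maker with initial wealth $w$ chooses between a safe action $s$ paying $0$ in both states, and a risky action $r$ paying $\alpha$ in state $1$ and $-\beta$ in state $0$ (or, in the second menu, $\hat r$ paying $\hat\alpha$ in state $1$ and $-\hat\beta$ in state $0$). She is a subjective expected utility maximizer with belief $\mu=\mathbb{P}(\text{state }1)$ and utility of terminal wealth $u_\theta$ in state $\theta$, the same belief and utility being used for both menus. *)

From Stdlib Require Import Reals.
Open Scope R_scope.

(* States Theta = {0,1} encoded as bool: false = state 0, true = state 1. *)
Definition strictly_increasing (f : R -> R) : Prop :=
  forall x y, x < y -> f x < f y.

Definition weakly_concave (f : R -> R) : Prop :=
  forall x y t, 0 <= t -> t <= 1 ->
    t * f x + (1 - t) * f y <= f (t * x + (1 - t) * y).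

Definition in_U (u : R -> bool -> R) : Prop :=
  forall th : bool,
    strictly_increasing (fun x => u x th) /\ weakly_concave (fun x => u x th).

Definition safe_pref (mu : R) (u : R -> bool -> R) (w a b : R) : Prop :=
  mu * u w true + (1 - mu) * u w false >=
  mu * u (w + a) true + (1 - mu) * u (w - b) false.

Definition safe_must_remain_optimal (alpha beta ah bh : R) (W : R -> Prop) : Prop :=
  forall (u : R -> bool -> R) (mu : R),
    in_U u -> 0 <= mu <= 1 ->
    (forall w, W w -> safe_pref mu u w alpha beta) ->
    (forall w, W w -> safe_pref mu u w ah bh).

Definition risky_becomes_worse (alpha beta ah bh : R) : Prop :=
  bh >= beta /\ alpha / beta >= ah / bh.

(* Sufficiency: put [lam = bh / beta >= 1].  Concavity of [u_1] bounds the gain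
   from [ah <= lam * alpha] by [lam] times the gain from [alpha], and concavity
   of [u_0] bounds the loss from [bh = lam * beta] from below by [lam] times the
   loss from [beta]; so [s] beating [r] at [w] makes it beat [r^] at [w].
   Necessity: linear utilities with slopes [beta] and [alpha] make [s] and [r]
   indifferent everywhere, which forces [ah / bh <= alpha / beta].  If [bh < beta],
   kink [u_0] at [w0 - bh] and [u_1] slightly above [w0]: losing [bh] at [w0] is
   then cheap while gaining [ah] there is dear, yet at every wealth the loss from
   [beta] reaches far enough into the steep part of [u_0] to outweigh the gain
   from [alpha]. *)

From Stdlib Require Import Reals Lra.
Open Scope R_scope.

Lemma Rdiv_ge_iff_cross_mult a b c d : 0 < b -> 0 < d ->
  (a / b >= c / d <-> c * b <= a * d).
Proof.
  intros Hb Hd.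
  assert (Hbd : 0 < b * d) by nra.
  assert (Ea : a / b * (b * d) = a * d) by (field; lra).
  assert (Ec : c / d * (b * d) = c * b) by (field; lra).
  split; intro H.
  - rewrite <- Ea, <- Ec. apply Rmult_le_compat_r; lra.
  - apply Rle_ge, (Rmult_le_reg_r (b * d)); [exact Hbd |].
    rewrite Ea, Ec. exact H.
Qed.

Lemma safe_pref_iff mu u w a b :
  safe_pref mu u w a b <->
  mu * (u (w + a) true - u w true) <= (1 - mu) * (u w false - u (w - b) false).
Proof. unfold safe_pref; split; intro; lra. Qed.

Lemma concave_three_point f x y z : weakly_concave f -> x <= y <= z ->
  (z - y) * f x + (y - x) * f z <= (z - x) * f y.
Proof.
  intros Hf [Hxy Hyz].
  destruct (Req_dec x z) as [<- | Hxz].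
  { replace y with x by lra. apply Req_le. ring. }
  set (t := (z - y) / (z - x)).
  assert (Ht : t * x + (1 - t) * z = y) by (unfold t; field; lra).
  assert (Hzt : (z - x) * t = z - y) by (unfold t; field; lra).
  specialize (Hf x z t ltac:(nra) ltac:(nra)).
  rewrite Ht in Hf.
  apply (Rmult_le_compat_l (z - x)) in Hf; [| lra].
  replace ((z - x) * (t * f x + (1 - t) * f z))
    with ((z - y) * f x + (y - x) * f z) in Hf by (unfold t; field; lra).
  exact Hf.
Qed.

Lemma increasing_concave_gain_le f w a c p q :
  strictly_increasing f -> weakly_concave f ->
  0 < a -> 0 < p <= q -> p * c <= q * a ->
  p * (f (w + c) - f w) <= q * (f (w + a) - f w).
Proof.
  intros Hinc Hconc Ha [Hp Hpq] Hpc.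
  assert (HD : 0 < f (w + a) - f w) by (specialize (Hinc w (w + a)); lra).
  destruct (Rle_lt_dec c a) as [Hca | Hac].
  - assert (Hfc : f (w + c) <= f (w + a)).
    { destruct (Req_dec c a) as [-> | Hne]; [lra |].
      apply Rlt_le, Hinc; lra. }
    nra.
  - (* the slope of a concave function over [w, w + x] decreases in x *)
    assert (Hslope : a * (f (w + c) - f w) <= c * (f (w + a) - f w)).
    { pose proof (concave_three_point f w (w + a) (w + c) Hconc ltac:(lra)).
      lra. }
    apply (Rmult_le_reg_l a); [exact Ha |].
    assert (p * (a * (f (w + c) - f w)) <= p * (c * (f (w + a) - f w)))
      by (apply Rmult_le_compat_l; lra).
    assert ((p * c) * (f (w + a) - f w) <= (q * a) * (f (w + a) - f w))
      by (apply Rmult_le_compat_r; lra).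
    lra.
Qed.

Lemma concave_loss_ge f w b b' : weakly_concave f -> 0 <= b <= b' ->
  b' * (f w - f (w - b)) <= b * (f w - f (w - b')).
Proof.
  intros Hconc Hb.
  pose proof (concave_three_point f (w - b') (w - b) w Hconc ltac:(lra)).
  lra.
Qed.

Lemma safe_pref_worse_risky mu u w alpha beta ah bh :
  in_U u -> 0 <= mu <= 1 -> 0 < alpha -> 0 < beta -> beta <= bh ->
  ah * beta <= alpha * bh ->
  safe_pref mu u w alpha beta -> safe_pref mu u w ah bh.
Proof.
  intros Hu Hmu Ha Hb Hbh Hratio Hpref.
  rewrite safe_pref_iff in *.
  destruct (Hu true) as [Hinc1 Hconc1], (Hu false) as [_ Hconc0].
  assert (Hgain : beta * (u (w + ah) true - u w true) <=
                  bh * (u (w + alpha) true - u w true)).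
  { apply (increasing_concave_gain_le (fun x => u x true)); auto; lra. }
  assert (Hloss : bh * (u w false - u (w - beta) false) <=
                  beta * (u w false - u (w - bh) false)).
  { apply (concave_loss_ge (fun x => u x false)); auto; lra. }
  apply (Rmult_le_reg_l beta); [exact Hb |].
  assert (mu * (beta * (u (w + ah) true - u w true)) <=
          mu * (bh * (u (w + alpha) true - u w true)))
    by (apply Rmult_le_compat_l; lra).
  assert (bh * (mu * (u (w + alpha) true - u w true)) <=
          bh * ((1 - mu) * (u w false - u (w - beta) false)))
    by (apply Rmult_le_compat_l; lra).
  assert ((1 - mu) * (bh * (u w false - u (w - beta) false)) <=
          (1 - mu) * (beta * (u w false - u (w - bh) false)))
    by (apply Rmult_le_compat_l; lra).
  lra.
Qed.

Definition state_utility (u1 u0 : R -> R) : R -> bool -> R :=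
  fun x th => if th then u1 x else u0 x.

Lemma in_U_state_utility u1 u0 :
  strictly_increasing u1 -> weakly_concave u1 ->
  strictly_increasing u0 -> weakly_concave u0 ->
  in_U (state_utility u1 u0).
Proof. intros; intros [|]; split; assumption. Qed.

Definition kinked_linear (s D k x : R) : R := s * (x - k) + D * Rmin (x - k) 0.

Lemma Rmin0_increment_bounds x y : x <= y -> 0 <= Rmin y 0 - Rmin x 0 <= y - x.
Proof. intro; unfold Rmin; destruct (Rle_dec x 0), (Rle_dec y 0); lra. Qed.

Lemma Rmin0_increment_nonneg x y : 0 <= x <= y -> Rmin y 0 - Rmin x 0 = 0.
Proof. intro; unfold Rmin; destruct (Rle_dec x 0), (Rle_dec y 0); lra. Qed.

Lemma Rmin0_increment_ge x y c : c <= y - x -> c <= - x -> c <= Rmin y 0 - Rmin x 0.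
Proof. intros; unfold Rmin; destruct (Rle_dec x 0), (Rle_dec y 0); lra. Qed.

Lemma kinked_linear_increasing s D k : 0 < s -> 0 <= D ->
  strictly_increasing (kinked_linear s D k).
Proof.
  intros Hs HD x y Hxy; unfold kinked_linear.
  pose proof (Rmin0_increment_bounds (x - k) (y - k) ltac:(lra)).
  nra.
Qed.

Lemma kinked_linear_concave s D k : 0 <= D -> weakly_concave (kinked_linear s D k).
Proof.
  intros HD x y t Ht0 Ht1; unfold kinked_linear.
  assert (Hmin : t * Rmin (x - k) 0 + (1 - t) * Rmin (y - k) 0 <=
                 Rmin (t * x + (1 - t) * y - k) 0).
  { pose proof (Rmin_l (x - k) 0); pose proof (Rmin_r (x - k) 0).
    pose proof (Rmin_l (y - k) 0); pose proof (Rmin_r (y - k) 0).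
    apply Rmin_glb; nra. }
  apply (Rmult_le_compat_l D) in Hmin; [| exact HD].
  lra.
Qed.

Lemma kinked_in_U s1 D1 k1 s0 D0 k0 : 0 < s1 -> 0 <= D1 -> 0 < s0 -> 0 <= D0 ->
  in_U (state_utility (kinked_linear s1 D1 k1) (kinked_linear s0 D0 k0)).
Proof.
  intros.
  apply in_U_state_utility;
    auto using kinked_linear_increasing, kinked_linear_concave.
Qed.

Lemma safe_must_remain_optimal_ratio alpha beta ah bh (W : R -> Prop) w0 :
  0 < alpha -> 0 < beta -> W w0 ->
  safe_must_remain_optimal alpha beta ah bh W -> ah * beta <= alpha * bh.
Proof.
  intros Ha Hb Hw0 Hsafe.
  set (u := state_utility (kinked_linear beta 0 0) (kinked_linear alpha 0 0)).
  assert (Hpref : safe_pref (1 / 2) u w0 ah bh).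
  { apply (Hsafe u); [apply kinked_in_U; lra | lra | | exact Hw0].
    intros w _. apply safe_pref_iff.
    unfold u, state_utility, kinked_linear. lra. }
  apply safe_pref_iff in Hpref.
  unfold u, state_utility, kinked_linear in Hpref. lra.
Qed.

Lemma safe_pref_counterexample alpha beta ah bh w0 :
  0 < alpha -> 0 < beta -> 0 < ah -> 0 < bh -> bh < beta ->
  exists u mu, in_U u /\ 0 <= mu <= 1 /\
    (forall w, safe_pref mu u w alpha beta) /\ ~ safe_pref mu u w0 ah bh.
Proof.
  intros Ha Hb Hah Hbh Hlt.
  set (d := Rmin ah ((beta - bh) / 2)).
  assert (Hd_ah : d <= ah) by apply Rmin_l.
  assert (Hd_gap : d <= (beta - bh) / 2) by apply Rmin_r.
  assert (Hd : 0 < d) by (apply Rmin_glb_lt; lra).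
  set (D1 := alpha * bh / d).
  set (D0 := 2 * D1 * alpha / (beta - bh)).
  assert (HD1 : D1 * d = alpha * bh) by (unfold D1; field; lra).
  assert (HD0 : D0 * ((beta - bh) / 2) = D1 * alpha) by (unfold D0; field; lra).
  assert (HD1p : 0 < D1) by (unfold D1; apply Rdiv_lt_0_compat; nra).
  assert (HD0p : 0 <= D0) by (unfold D0; apply Rlt_le, Rdiv_lt_0_compat; nra).
  set (k1 := w0 + d). set (k0 := w0 - bh).
  exists (state_utility (kinked_linear beta D1 k1) (kinked_linear alpha D0 k0)), (1 / 2).
  split; [apply kinked_in_U; lra |]. split; [lra |]. split.
  - intro w. apply safe_pref_iff. unfold state_utility, kinked_linear.
    assert (Hkinks : D1 * (Rmin (w + alpha - k1) 0 - Rmin (w - k1) 0) <=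
                     D0 * (Rmin (w - k0) 0 - Rmin (w - beta - k0) 0)).
    { pose proof (Rmin0_increment_bounds (w - beta - k0) (w - k0) ltac:(lra)).
      destruct (Rle_lt_dec k1 w).
      - rewrite (Rmin0_increment_nonneg (w - k1)) by lra.
        nra.
      - (* below [k1] the loss from [beta] crosses at least [(beta - bh) / 2]
           of the steep part of [u_0] *)
        pose proof (Rmin0_increment_bounds (w - k1) (w + alpha - k1) ltac:(lra)).
        pose proof (Rmin0_increment_ge (w - beta - k0) (w - k0) ((beta - bh) / 2)
                      ltac:(lra) ltac:(unfold k0, k1 in *; lra)).
        nra. }
    lra.
  - intro Hpref. apply safe_pref_iff in Hpref.
    unfold state_utility, kinked_linear, k1, k0 in Hpref.
    rewrite (Rmin_right (w0 + ah - (w0 + d))), (Rmin_left (w0 - (w0 + d))),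
      (Rmin_right (w0 - (w0 - bh))), (Rmin_right (w0 - bh - (w0 - bh))) in Hpref
      by lra.
    nra.
Qed.

Lemma safe_must_remain_optimal_beta alpha beta ah bh (W : R -> Prop) w0 :
  0 < alpha -> 0 < beta -> 0 < ah -> 0 < bh -> W w0 ->
  safe_must_remain_optimal alpha beta ah bh W -> beta <= bh.
Proof.
  intros Ha Hb Hah Hbh Hw0 Hsafe.
  destruct (Rle_lt_dec beta bh) as [Hle | Hlt]; [exact Hle | exfalso].
  destruct (safe_pref_counterexample alpha beta ah bh w0 Ha Hb Hah Hbh Hlt)
    as (u & mu & Hu & Hmu & Hpref & Hnot).
  exact (Hnot (Hsafe u mu Hu Hmu (fun w _ => Hpref w) w0 Hw0)).
Qed.

Theorem theorem1 (alpha beta ah bh : R) (W : R -> Prop) :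
  0 < alpha -> 0 < beta -> 0 < ah -> 0 < bh ->
  (exists w, W w) ->
  (safe_must_remain_optimal alpha beta ah bh W <->
   risky_becomes_worse alpha beta ah bh).
Proof.
  intros Ha Hb Hah Hbh [w0 Hw0].
  unfold risky_becomes_worse.
  rewrite (Rdiv_ge_iff_cross_mult alpha beta ah bh Hb Hbh).
  split.
  - intro Hsafe. split.
    + apply Rle_ge, (safe_must_remain_optimal_beta alpha beta ah bh W w0); auto.
    + exact (safe_must_remain_optimal_ratio alpha beta ah bh W w0 Ha Hb Hw0 Hsafe).
  - intros [Hbh_ge Hratio] u mu Hu Hmu Hpref w Hw.
    apply (safe_pref_worse_risky mu u w alpha beta); auto using Rge_le.
Qed.
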